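(* There is a procedure which makes six two-qubit measurements, each on a fresh copy of an unknown two-qubit state $|\psi\rangle$, and which, for every $|\psi\rangle$ and every collection of outcomes of these measurements each of which occurs with nonzero probability on $|\psi\rangle$, outputs with certainty a two-qubit Pauli string $P\in\{I,X,Y,Z\}^{\otimes 2}$ that does not stabilize $|\psi\rangle$ (i.e. such that measuring the observable $P$ on $|\psi\rangle$ does not have a deterministic outcome).
   Context: For a Pauli string $P$ (a Hermitian operator with eigenvalues $\pm1$), the Pauli measurement of $P$ projects onto its $+1$ or $-1$ eigenspace and reports the eigenvalue. $P$ is called a stabilizer of a state if this outcome is deterministic and a non-stabilizer otherwise. A joint measurement of pairwise commuting Pauli strings gives outcomes for each of them, and the outcome of a product of these strings is the product of their outcomes (times the sign relating the product to the positive Pauli string). *)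

(* Complex scalars: an arbitrary numClosedFieldType C
   (e.g. the complex numbers R[i], or algC). *)
From HB Require Import structures.
From mathcomp Require Import all_boot all_order all_algebra.
Set Implicit Arguments. Unset Strict Implicit. Unset Printing Implicit Defensive.
Import Order.TTheory GRing.Theory Num.Theory.
Local Open Scope ring_scope.

Section Quantum.
Variable C : numClosedFieldType.

Definition adjmx m n (A : 'M[C]_(m, n)) : 'M[C]_(n, m) := (map_mx Num.conj A)^T.

(* a two-qubit (pure) state: a unit vector of C^4 = C^2 (x) C^2 *)
Definition is_state (psi : 'cV[C]_4) : Prop := adjmx psi *m psi = 1%:M.

Definition is_projmeas (O : finType) (M : O -> 'M[C]_4) : Prop :=
  (forall o, adjmx (M o) = M o) /\ (forall o, M o *m M o = M o) /\
  \sum_(o : O) M o = 1%:M.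

Definition prob (O : finType) (M : O -> 'M[C]_4) (o : O) (psi : 'cV[C]_4) : C :=
  (adjmx psi *m M o *m psi) 0 0.

(* single-qubit Paulis, indexed 0 = I, 1 = X, 2 = Y, 3 = Z *)
Definition pauli1 (a : 'I_4) : 'M[C]_2 :=
  \matrix_(r < 2, c < 2)
    match nat_of_ord a, nat_of_ord r, nat_of_ord c with
    | 0, 0, 0 => 1 | 0, 1, 1 => 1
    | 1, 0, 1 => 1 | 1, 1, 0 => 1
    | 2, 0, 1 => - 'i | 2, 1, 0 => 'i
    | 3, 0, 0 => 1 | 3, 1, 1 => -1
    | _, _, _ => 0
    end.

(* Kronecker product of 2x2 matrices; basis index i of C^4 = 2 * i1 + i2 *)
Definition kron2 (A B : 'M[C]_2) : 'M[C]_4 :=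
  \matrix_(i < 4, j < 4)
    (A (inord (i %/ 2)) (inord (j %/ 2)) * B (inord (i %% 2)) (inord (j %% 2))).

Definition pauli2 (p : 'I_4 * 'I_4) : 'M[C]_4 := kron2 (pauli1 p.1) (pauli1 p.2).

(* the Pauli measurement of P: projectors onto the +1 (b = false) and
   -1 (b = true) eigenspaces of P *)
Definition pauli_meas (p : 'I_4 * 'I_4) (b : bool) : 'M[C]_4 :=
  2^-1 *: (1%:M + (-1) ^+ b *: pauli2 p).

Definition stabilizes (p : 'I_4 * 'I_4) (psi : 'cV[C]_4) : Prop :=
  exists b : bool, prob (pauli_meas p) b psi = 1.

End Quantum.

(* The measurements are those of the Mermin-Peres magic square: nine
   two-qubit Paulis in a 3x3 grid whose rows and columns consist of commuting
   Paulis, every line multiplying to +I except the last column, which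
   multiplies to -I.  Measuring the first two Paulis of a line jointly
   determines outcomes for all three, so the six measurements assign each
   cell an outcome once through its row and once through its column.  The row
   assignments have even total parity and the column assignments odd, so some
   cell P receives opposite outcomes.  Each of the two joint outcomes lies in
   the corresponding eigenspace of P and was observed with nonzero
   probability, hence both eigenspaces of P meet the state: P does not
   stabilize it. *)

From mathcomp Require Import all_boot all_order all_algebra.
Import GRing.Theory Num.Theory.
Local Open Scope ring_scope.
Set Implicit Arguments. Unset Strict Implicit.

Section Adjoint.
Variable C : numClosedFieldType.

Lemma adjmxD m n (A B : 'M[C]_(m, n)) : adjmx (A + B) = adjmx A + adjmx B.
Proof. by rewrite /adjmx map_mxD linearD. Qed.

Lemma adjmxZ m n a (A : 'M[C]_(m, n)) : adjmx (a *: A) = a^* *: adjmx A.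
Proof. by rewrite /adjmx map_mxZ linearZ. Qed.

Lemma adjmx0 m n : adjmx (0 : 'M[C]_(m, n)) = 0.
Proof. by rewrite /adjmx map_mx0 trmx0. Qed.

Lemma adjmx1 n : adjmx (1%:M : 'M[C]_n) = 1%:M.
Proof. by rewrite /adjmx map_mx1 trmx1. Qed.

Lemma adjmxM m n p (A : 'M[C]_(m, n)) (B : 'M[C]_(n, p)) :
  adjmx (A *m B) = adjmx B *m adjmx A.
Proof. by rewrite /adjmx map_mxM trmx_mul. Qed.

Lemma adjmx_mul_self_eq0 n (v : 'cV[C]_n) : (adjmx v *m v) 0 0 = 0 -> v = 0.
Proof.
rewrite mxE => /psumr_eq0P vv0; apply/matrixP => i j; rewrite (ord1 j) mxE.
have /eqP : (adjmx v) 0 i * v i 0 = 0.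
  by apply: vv0 => // k _; rewrite !mxE mulrC mul_conjC_ge0.
by rewrite !mxE mulrC mul_conjC_eq0 => /eqP.
Qed.

End Adjoint.

Section EigenProjector.
Variables (C : numClosedFieldType) (n : nat).
Implicit Types (P M : 'M[C]_n) (b : bool).

Definition eigproj P b : 'M[C]_n := 2^-1 *: (1%:M + (-1) ^+ b *: P).

Definition expect (M : 'M[C]_n) (v : 'cV[C]_n) : C := (adjmx v *m M *m v) 0 0.

Lemma sign_mul_self b : (-1) ^+ b * (-1) ^+ b = 1 :> C.
Proof. by rewrite -signr_addb addbb. Qed.

Lemma half_double M : 2^-1 *: (M + M) = M.
Proof. by rewrite -mulr2n -scaler_nat scalerA mulVf ?scale1r ?pnatr_eq0. Qed.

Lemma eigproj_sum P : eigproj P false + eigproj P true = 1%:M.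
Proof.
by rewrite -scalerDr expr0 expr1 scale1r scaleN1r addrACA subrr addr0 half_double.
Qed.

Lemma eigproj_fix P M b : P *m M = (-1) ^+ b *: M -> eigproj P b *m M = M.
Proof.
move=> PM; rewrite -scalemxAl mulmxDl mul1mx -scalemxAl PM.
by rewrite scalerA sign_mul_self scale1r half_double.
Qed.

Lemma comm_mx_eigproj P M b : comm_mx M P -> comm_mx M (eigproj P b).
Proof.
rewrite /comm_mx => MP; rewrite -scalemxAr -scalemxAl mulmxDr mulmxDl mulmx1 mul1mx.
by rewrite -scalemxAr -scalemxAl MP.
Qed.

Lemma expect_eigproj_negb P b v : adjmx v *m v = 1%:M ->
  expect (eigproj P (~~ b)) v = 1 - expect (eigproj P b) v.
Proof.
move=> v_unit; have -> : eigproj P (~~ b) = 1%:M - eigproj P b.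
  by rewrite -(eigproj_sum P); case: b; rewrite /= ?addrK // addrC addKr.
rewrite /expect mulmxBr mulmx1 mulmxBl v_unit.
by set E := _ *m _ *m v; rewrite !mxE.
Qed.

Section Involution.
Variable P : 'M[C]_n.
Hypotheses (P_herm : adjmx P = P) (P_invol : P *m P = 1%:M).

Lemma adjmx_eigproj b : adjmx (eigproj P b) = eigproj P b.
Proof.
by rewrite adjmxZ adjmxD adjmx1 adjmxZ P_herm rmorph_sign fmorphV rmorph_nat.
Qed.

Lemma mul_eigproj b : P *m eigproj P b = (-1) ^+ b *: eigproj P b.
Proof.
rewrite -scalemxAr mulmxDr mulmx1 -scalemxAr P_invol scalerA mulrC -scalerA.
by congr (_ *: _); rewrite scalerDr scalerA sign_mul_self scale1r addrC.
Qed.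

Lemma eigproj_idem b : eigproj P b *m eigproj P b = eigproj P b.
Proof. exact/eigproj_fix/mul_eigproj. Qed.

Lemma eigproj_mulmx_eq0 b v : expect (eigproj P b) v = 0 -> eigproj P b *m v = 0.
Proof.
move=> Ev0; apply: adjmx_mul_self_eq0.
by rewrite adjmxM mulmxA -(mulmxA (adjmx v)) adjmx_eigproj eigproj_idem.
Qed.

End Involution.

Lemma expect_eq0_of_range (Q M : 'M[C]_n) v :
  adjmx Q = Q -> Q *m v = 0 -> Q *m M = M -> expect M v = 0.
Proof.
move=> Q_herm Qv0 QM; rewrite /expect -QM mulmxA -{1}Q_herm -adjmxM Qv0.
by rewrite adjmx0 !mul0mx mxE.
Qed.

Lemma expect_eigproj_neq1 P v (M1 M2 : 'M[C]_n) b :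
  adjmx P = P -> P *m P = 1%:M -> adjmx v *m v = 1%:M ->
  eigproj P b *m M1 = M1 -> eigproj P (~~ b) *m M2 = M2 ->
  expect M1 v != 0 -> expect M2 v != 0 -> forall c, expect (eigproj P c) v != 1.
Proof.
move=> P_herm P_invol v_unit fix1 fix2 nz1 nz2 c; apply/eqP => sure.
have killed : eigproj P (~~ c) *m v = 0.
  by apply: eigproj_mulmx_eq0 => //; rewrite expect_eigproj_negb // sure subrr.
have [M fixM nzM] : exists2 M, eigproj P (~~ c) *m M = M & expect M v != 0.
  case: b c {sure killed} fix1 fix2 => [] [] ? ?.
  - by exists M2.
  - by exists M1.
  - by exists M1.
  - by exists M2.
by rewrite (expect_eq0_of_range (adjmx_eigproj P_herm _) killed fixM) eqxx in nzM.
Qed.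

End EigenProjector.

(* Outcome b stands for the eigenvalue (-1)^b.  [context_value sg o j] is the
   outcome of the j-th observable of [context_obs A B sg] implied by the
   outcome o of the joint measurement of A and B. *)
Definition context_value (sg : bool) (o : bool * bool) (j : 'I_3) : bool :=
  match nat_of_ord j with 0 => o.1 | 1 => o.2 | _ => o.1 (+) o.2 (+) sg end.

Lemma context_value_parity sg o : \big[addb/false]_(j < 3) context_value sg o j = sg.
Proof. by rewrite !big_ord_recr big_ord0 /=; case: o => [[] []]; case: sg. Qed.

Lemma context_value_mismatch (rs cs : 'I_3 -> bool) (ro co : 'I_3 -> bool * bool) :
  \big[addb/false]_(r < 3) rs r != \big[addb/false]_(c < 3) cs c ->
  exists r c, context_value (rs r) (ro r) c != context_value (cs c) (co c) r.
Proof.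
move=> parity_neq.
have /existsP[r /existsP[c mismatch]] :
    [exists r, exists c, context_value (rs r) (ro r) c != context_value (cs c) (co c) r].
  apply: contraNT parity_neq => /existsPn agree; apply/eqP.
  under eq_bigr => r _ do rewrite -(context_value_parity (rs r) (ro r)).
  under [RHS]eq_bigr => c _ do rewrite -(context_value_parity (cs c) (co c)).
  rewrite exchange_big /=; apply: eq_bigr => c _; apply: eq_bigr => r _.
  by move/existsPn/(_ c)/negbNE/eqP: (agree r).
by exists r, c.
Qed.

Section JointMeasurement.
Variables (C : numClosedFieldType) (n : nat).

Definition context_obs (A B : 'M[C]_n) (sg : bool) (j : 'I_3) : 'M[C]_n :=
  match nat_of_ord j with 0 => A | 1 => B | _ => (-1) ^+ sg *: (A *m B) end.

Definition joint_meas (A B : 'M[C]_n) (o : bool * bool) : 'M[C]_n :=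
  eigproj A o.1 *m eigproj B o.2.

Variables A B : 'M[C]_n.
Hypotheses (A_herm : adjmx A = A) (B_herm : adjmx B = B).
Hypotheses (A_invol : A *m A = 1%:M) (B_invol : B *m B = 1%:M).
Hypothesis AB_comm : comm_mx A B.

Lemma comm_eigproj s t : comm_mx (eigproj A s) (eigproj B t).
Proof. exact/comm_mx_sym/comm_mx_eigproj/comm_mx_sym/comm_mx_eigproj. Qed.

Lemma adjmx_joint_meas o : adjmx (joint_meas A B o) = joint_meas A B o.
Proof. by rewrite adjmxM !adjmx_eigproj // -comm_eigproj. Qed.

Lemma joint_meas_idem o : joint_meas A B o *m joint_meas A B o = joint_meas A B o.
Proof.
rewrite /joint_meas mulmxA -(mulmxA _ _ (eigproj A o.1)) -comm_eigproj.
by rewrite mulmxA eigproj_idem // -mulmxA eigproj_idem.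
Qed.

Lemma sum_joint_meas : \sum_o joint_meas A B o = 1%:M.
Proof.
rewrite -(pair_bigA _ (fun a b => eigproj A a *m eigproj B b)) /= !big_bool /=.
by rewrite -!mulmxDr [eigproj _ true + _]addrC eigproj_sum !mulmx1 addrC eigproj_sum.
Qed.

Lemma mul_joint_meas sg j o :
  context_obs A B sg j *m joint_meas A B o =
    (-1) ^+ context_value sg o j *: joint_meas A B o.
Proof.
have B_meas : B *m joint_meas A B o = (-1) ^+ o.2 *: joint_meas A B o.
  rewrite /joint_meas mulmxA (comm_mx_eigproj o.1 (comm_mx_sym AB_comm)).
  by rewrite -mulmxA mul_eigproj // -scalemxAr.
have A_meas : A *m joint_meas A B o = (-1) ^+ o.1 *: joint_meas A B o.
  by rewrite /joint_meas mulmxA mul_eigproj // -scalemxAl.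
case: j => [[|[|[|//]]] ?] //=.
rewrite -scalemxAl -mulmxA B_meas -scalemxAr A_meas !scalerA -!signr_addb.
by rewrite /context_value /=; case: o {A_meas B_meas} => [[] []]; case: sg.
Qed.

Lemma eigproj_joint_meas sg j o :
  eigproj (context_obs A B sg j) (context_value sg o j) *m joint_meas A B o =
    joint_meas A B o.
Proof. exact/eigproj_fix/mul_joint_meas. Qed.

End JointMeasurement.

Lemma is_projmeas_joint_meas (C : numClosedFieldType) (A B : 'M[C]_4) :
  adjmx A = A -> adjmx B = B -> A *m A = 1%:M -> B *m B = 1%:M -> comm_mx A B ->
  is_projmeas (joint_meas A B).
Proof.
move=> *; split; [|split].
- exact: adjmx_joint_meas.
- exact: joint_meas_idem.
- exact: sum_joint_meas.
Qed.

Lemma sum_ord4_pair (R : nmodType) (G : 'I_2 -> 'I_2 -> R) :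
  \sum_(k < 4) G (inord (k %/ 2)) (inord (k %% 2)) = \sum_(a < 2) \sum_(b < 2) G a b.
Proof.
rewrite !big_mknat !big_nat_recr //= !big_nil !inordK //=.
rewrite !big_mknat !big_nat_recr //= !big_nil.
by rewrite !add0r !addrA.
Qed.

Section Pauli.
Variable C : numClosedFieldType.

Definition pI : 'I_4 := @Ordinal 4 0 isT.
Definition pX : 'I_4 := @Ordinal 4 1 isT.
Definition pY : 'I_4 := @Ordinal 4 2 isT.
Definition pZ : 'I_4 := @Ordinal 4 3 isT.

Lemma kron2_mul (A B A' B' : 'M[C]_2) :
  kron2 A B *m kron2 A' B' = kron2 (A *m A') (B *m B').
Proof.
apply/matrixP => i j; rewrite !mxE big_distrlr /=.
under eq_bigr do rewrite !mxE mulrACA.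
by rewrite (sum_ord4_pair (fun a b => A _ a * A' a _ * (B _ b * B' b _))).
Qed.

Lemma kron2_1 : kron2 1%:M 1%:M = 1%:M :> 'M[C]_4.
Proof.
apply/matrixP; case=> [[|[|[|[|?]]]] ?] //; case=> [[|[|[|[|?]]]] ?] //;
  by rewrite !mxE -!val_eqE /= !inordK //= ?mulr1 ?mulr0 ?mul0r.
Qed.

Lemma adjmx_kron2 (A B : 'M[C]_2) : adjmx (kron2 A B) = kron2 (adjmx A) (adjmx B).
Proof. by apply/matrixP => i j; rewrite !mxE rmorphM. Qed.

Lemma kron2Z a b (A B : 'M[C]_2) : kron2 (a *: A) (b *: B) = (a * b) *: kron2 A B.
Proof. by apply/matrixP => i j; rewrite !mxE mulrACA. Qed.

Ltac entrywise :=
  apply/matrixP; case=> [[|[|?]] ?] //; case=> [[|[|?]] ?] //;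
  rewrite !mxE ?big_ord_recr ?big_ord0 /= ?mxE /=;
  rewrite ?rmorphN ?rmorph1 ?rmorph0 /= ?conjCi ?opprK;
  rewrite ?mulr0 ?mul0r ?mulr1 ?mul1r ?add0r ?addr0 ?mulrNN ?mulrN ?mulNr;
  rewrite -?expr2 ?sqrCi ?expr1n ?opprK.

Lemma pauli1_I : pauli1 C pI = 1%:M.
Proof. by entrywise. Qed.

Lemma adjmx_pauli1 a : adjmx (pauli1 C a) = pauli1 C a.
Proof.
by rewrite /adjmx; case: a => [[|[|[|[|?]]]] ?] //; entrywise.
Qed.

Lemma pauli1_mul_self a : pauli1 C a *m pauli1 C a = 1%:M.
Proof. by case: a => [[|[|[|[|?]]]] ?] //; entrywise. Qed.

Lemma pauli1_XZ : pauli1 C pX *m pauli1 C pZ = - 'i *: pauli1 C pY.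
Proof. by entrywise. Qed.

Lemma pauli1_ZX : pauli1 C pZ *m pauli1 C pX = 'i *: pauli1 C pY.
Proof. by entrywise. Qed.

Lemma adjmx_pauli2 p : adjmx (pauli2 C p) = pauli2 C p.
Proof. by rewrite /pauli2 adjmx_kron2 !adjmx_pauli1. Qed.

Lemma pauli2_mul_self p : pauli2 C p *m pauli2 C p = 1%:M.
Proof. by rewrite /pauli2 kron2_mul !pauli1_mul_self kron2_1. Qed.

End Pauli.

Section MagicSquare.
Variable C : numClosedFieldType.

Definition square (r c : nat) : 'I_4 * 'I_4 :=
  match r, c with
  | 0, 0 => (pX, pI) | 0, 1 => (pI, pX) | 0, _ => (pX, pX)
  | 1, 0 => (pI, pZ) | 1, 1 => (pZ, pI) | 1, _ => (pZ, pZ)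
  | _, 0 => (pX, pZ) | _, 1 => (pZ, pX) | _, _ => (pY, pY)
  end.

Local Notation sq r c := (pauli2 C (square r c)).

Lemma square_row_comm r : comm_mx (sq r 0) (sq r 1).
Proof.
rewrite /comm_mx /pauli2 !kron2_mul.
case: r => [|[|r]] /=; rewrite ?pauli1_I ?mulmx1 ?mul1mx //.
by rewrite pauli1_XZ pauli1_ZX !kron2Z mulrC.
Qed.

Lemma square_col_comm c : comm_mx (sq 0 c) (sq 1 c).
Proof.
rewrite /comm_mx /pauli2 !kron2_mul.
case: c => [|[|c]] /=; rewrite ?pauli1_I ?mulmx1 ?mul1mx //.
by rewrite pauli1_XZ pauli1_ZX !kron2Z mulrNN.
Qed.

Lemma square_row_obs (r j : 'I_3) : context_obs (sq r 0) (sq r 1) false j = sq r j.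
Proof.
case: j => [[|[|[|//]]] ?] //; rewrite /context_obs /= scale1r /pauli2 kron2_mul.
case: r => [[|[|[|//]]] ?] /=; rewrite ?pauli1_I ?mulmx1 ?mul1mx //.
by rewrite pauli1_XZ pauli1_ZX kron2Z mulNr -expr2 sqrCi opprK scale1r.
Qed.

Lemma square_col_obs (c i : 'I_3) :
  context_obs (sq 0 c) (sq 1 c) (c == 2 :> nat) i = sq i c.
Proof.
case: i => [[|[|[|//]]] ?] //; rewrite /context_obs /= /pauli2 kron2_mul.
case: c => [[|[|[|//]]] ?] /=; rewrite ?scale1r ?pauli1_I ?mulmx1 ?mul1mx //.
by rewrite pauli1_XZ kron2Z mulrNN -expr2 sqrCi scalerA mulrNN mulr1 scale1r.
Qed.

Definition row_meas (r : nat) : bool * bool -> 'M[C]_4 :=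
  joint_meas (sq r 0) (sq r 1).
Definition col_meas (c : nat) : bool * bool -> 'M[C]_4 :=
  joint_meas (sq 0 c) (sq 1 c).

Definition magic_meas (k : 'I_(3 + 3)) : bool * bool -> 'M[C]_4 :=
  match split k with inl r => row_meas r | inr c => col_meas c end.

Lemma magic_meas_row (r : 'I_3) : magic_meas (lshift 3 r) = row_meas r.
Proof. by rewrite /magic_meas -[lshift 3 r]/(unsplit (inl r)) unsplitK. Qed.

Lemma magic_meas_col (c : 'I_3) : magic_meas (rshift 3 c) = col_meas c.
Proof. by rewrite /magic_meas -[rshift 3 c]/(unsplit (inr c)) unsplitK. Qed.

Lemma is_projmeas_magic_meas k : is_projmeas (magic_meas k).
Proof.
rewrite /magic_meas; case: split => [r | c];
  apply: is_projmeas_joint_meas; rewrite ?adjmx_pauli2 ?pauli2_mul_self //.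
- exact: square_row_comm.
- exact: square_col_comm.
Qed.

Lemma magic_square_not_stabilizes psi (r c : 'I_3) ro co :
  is_state psi ->
  expect (row_meas r ro) psi != 0 -> expect (col_meas c co) psi != 0 ->
  context_value false ro c != context_value (c == 2 :> nat) co r ->
  ~ stabilizes (square r c) psi.
Proof.
move=> psi_state nz_row nz_col mismatch [b sure].
have row_fix := eigproj_joint_meas (pauli2_mul_self C _) (pauli2_mul_self C _)
  (square_row_comm r) false c ro.
have col_fix := eigproj_joint_meas (pauli2_mul_self C _) (pauli2_mul_self C _)
  (square_col_comm c) (c == 2 :> nat) r co.
rewrite square_row_obs in row_fix; rewrite square_col_obs in col_fix.
have col_value : context_value (c == 2 :> nat) co r = ~~ context_value false ro c.
  by move: mismatch; case: (context_value _ co r); case: (context_value _ ro c).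
rewrite col_value in col_fix.
move/eqP: sure; apply/negP.
exact: expect_eigproj_neq1 (adjmx_pauli2 C _) (pauli2_mul_self C _) psi_state
  row_fix col_fix nz_row nz_col b.
Qed.

End MagicSquare.

Definition magic_mismatch (os : 6.-tuple (bool * bool)) (rc : 'I_3 * 'I_3) : bool :=
  context_value false (tnth os (lshift 3 rc.1)) rc.2 !=
  context_value (rc.2 == 2 :> nat) (tnth os (rshift 3 rc.2)) rc.1.

(* The default (pI, pI) stabilizes every state; it is never output, by
   [magic_mismatch_exists]. *)
Definition magic_output (os : 6.-tuple (bool * bool)) : 'I_4 * 'I_4 :=
  if [pick rc | magic_mismatch os rc] is Some (r, c) then square r c else (pI, pI).

Lemma magic_mismatch_exists os : exists rc, magic_mismatch os rc.
Proof.
have [|r [c mismatch]] :=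
  @context_value_mismatch (fun=> false) (fun c : 'I_3 => c == 2 :> nat)
  (fun r => tnth os (lshift 3 r)) (fun c => tnth os (rshift 3 c)).
  by rewrite !big_ord_recr !big_ord0.
by exists (r, c).
Qed.

Unset Implicit Arguments.

Theorem mainTheorem6 (C : numClosedFieldType) :
  exists (O : finType) (meas : seq O -> O -> 'M[C]_4)
         (out : 6.-tuple O -> 'I_4 * 'I_4),
    (forall h : seq O, is_projmeas (meas h)) /\
    forall (psi : 'cV[C]_4) (os : 6.-tuple O),
      is_state psi ->
      (forall k : 'I_6, prob (meas (take k os)) (tnth os k) psi != 0) ->
      ~ stabilizes (out os) psi.
Proof.
pose meas (h : seq (bool * bool)) := magic_meas C (inord (size h)).
exists (bool * bool)%type, meas, magic_output.
split => [h | psi os psi_state nz_prob]; first exact: is_projmeas_magic_meas.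
have meas_take (k : 'I_6) : meas (take k os) = magic_meas C k.
  by rewrite /meas size_take size_tuple ltn_ord inord_val.
rewrite /magic_output; case: pickP => [[r c] mismatch | no_mismatch]; last first.
  by have [rc] := magic_mismatch_exists os; rewrite no_mismatch.
apply: (magic_square_not_stabilizes psi_state _ _ mismatch).
- by have := nz_prob (lshift 3 r); rewrite meas_take magic_meas_row.
- by have := nz_prob (rshift 3 c); rewrite meas_take magic_meas_col.
Qed.
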